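(* Let $\pi\sqrt2<L<M$. Then there is at most one $t\in(0,L)$ with $z_M(t)=z_L(t)$.
   Context: For $\alpha\in(0,1/\sqrt2)$ let $L_\alpha=\pi/\mathrm{AGM}(\alpha,\tfrac12\sqrt{1+2\alpha^2})$; $\alpha\mapsto L_\alpha$ is a decreasing bijection from $(0,1/\sqrt2)$ onto $(\pi\sqrt2,\infty)$. For $L>\pi\sqrt2$ let $\alpha$ satisfy $L_\alpha=L$ and let $x_0>y_0>0$ satisfy $x_0^2+y_0^2=1$, $x_0y_0=\alpha^2$. Let $(x_L,y_L,z_L)(t)$ solve $x'=-xz$, $y'=yz$, $z'=x^2-y^2$ ($'=d/dt$) with initial value $(x_0,y_0,0)$. *)

From Stdlib Require Import Reals Lra.
From Coquelicot Require Import Coquelicot.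
Open Scope R_scope.

Fixpoint agm_iter (a b : R) (n : nat) : R * R :=
  match n with
  | O => (a, b)
  | S k => let p := agm_iter a b k in
           ((fst p + snd p) / 2, sqrt (fst p * snd p))
  end.

Definition AGM (a b : R) : R :=
  real (Lim_seq (fun n => fst (agm_iter a b n))).

Definition L_of (alpha : R) : R :=
  PI / AGM alpha (/ 2 * sqrt (1 + 2 * alpha ^ 2)).

Definition solves_system (x y z : R -> R) : Prop :=
  forall t : R,
    derivable_pt_lim x t (- (x t * z t)) /\
    derivable_pt_lim y t (y t * z t) /\
    derivable_pt_lim z t (x t ^ 2 - y t ^ 2).

Definition is_sol_L (L : R) (x y z : R -> R) : Prop :=
  exists alpha x0 y0 : R,
    0 < alpha /\ alpha < / sqrt 2 /\ L_of alpha = L /\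
    x0 > y0 /\ y0 > 0 /\ x0 ^ 2 + y0 ^ 2 = 1 /\ x0 * y0 = alpha ^ 2 /\
    x 0 = x0 /\ y 0 = y0 /\ z 0 = 0 /\
    solves_system x y z.

(* Since x y and x^2 + y^2 + z^2 are conserved, z solves z'' = -2 z (1 - z^2) with energy
   z'^2 = (1 - z^2)^2 - 4 alpha^4, and it is given explicitly by z = k sin phi(t), where
   k = sqrt (1 - 2 alpha^2) and phi inverts
     t(phi) = 1/2 int_0^phi dtheta / sqrt (beta^2 cos^2 theta + alpha^2 sin^2 theta),
   beta = sqrt (1 + 2 alpha^2) / 2.  Landen's transformation shows that the complete integral
   (up to pi/2) equals pi / (2 AGM (alpha, beta)), so L_alpha = 4 t(pi/2) is the period of z,
   and alpha decreases as L grows.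

   At a crossing z_M = z_L the energies give z_M'^2 - z_L'^2 = 4 (alpha_L^4 - alpha_M^4) > 0,
   so z_M - z_L changes sign there, in the direction of z_M'.  From the crossing at t = 0,
   z_M - z_L stays positive while z_M rises (up to its quarter period Q_M); a crossing after
   3 Q_M would keep z_M - z_L positive up to L, contradicting z_M(L) < 0 = z_L(L); and on
   (Q_M, 3 Q_M), where z_M decreases, z_M - z_L can only cross downwards, hence at most once. *)

From Stdlib Require Import Reals Lra Psatz Nsatz Ranalysis5 IndefiniteDescription.
From Coquelicot Require Import Coquelicot.
Open Scope R_scope.

(** * Calculus on the real line *)

Lemma derivable_pt_lim_RInt (f : R -> R) x :
  (forall y, continuous f y) -> derivable_pt_lim (fun y => RInt f 0 y) x (f x).
Proof.
  intros Hf. apply is_derive_Reals.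
  apply (is_derive_RInt f (fun y => RInt f 0 y) 0 x); [|apply Hf].
  apply filter_forall. intros y.
  apply (RInt_correct (V := R_CompleteNormedModule)), ex_RInt_continuous.
  intros; apply Hf.
Qed.

Lemma derivable_pt_lim_continuity_pt f x l :
  derivable_pt_lim f x l -> continuity_pt f x.
Proof. intros H. exact (derivable_continuous_pt f x (exist _ l H)). Qed.

Lemma derivable_pt_lim_nonneg_le (f df : R -> R) a b :
  a <= b -> (forall c, a <= c <= b -> derivable_pt_lim f c (df c)) ->
  (forall c, a <= c <= b -> 0 <= df c) -> f a <= f b.
Proof.
  intros Hab Hd Hp. destruct (Req_dec a b) as [<-|Hne]; [lra|].
  destruct (MVT_cor2 f df a b) as [c [Hc Hcab]]; [lra|exact Hd|].
  assert (0 <= df c) by (apply Hp; lra). nra.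
Qed.

Lemma derivable_pt_lim_pos_lt (f df : R -> R) a b :
  a < b -> (forall c, a <= c <= b -> derivable_pt_lim f c (df c)) ->
  (forall c, a <= c <= b -> 0 < df c) -> f a < f b.
Proof.
  intros Hab Hd Hp.
  destruct (MVT_cor2 f df a b) as [c [Hc Hcab]]; [lra|exact Hd|].
  assert (0 < df c) by (apply Hp; lra). nra.
Qed.

Lemma derivable_pt_lim_0_eq (f : R -> R) :
  (forall t, derivable_pt_lim f t 0) -> forall s t, f s = f t.
Proof.
  intros Hd.
  assert (Hle : forall s t, s <= t -> f s <= f t).
  { intros s t Hst. apply (derivable_pt_lim_nonneg_le f (fun _ => 0)); auto. intros; lra. }
  assert (Hge : forall s t, s <= t -> - f s <= - f t).
  { intros s t Hst. apply (derivable_pt_lim_nonneg_le (fun u => - f u) (fun _ => 0)); auto.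
    - intros c _. rewrite <- Ropp_0. now apply derivable_pt_lim_opp.
    - intros; lra. }
  intros s t. destruct (Rle_lt_dec s t) as [Hst|Hts].
  - specialize (Hle s t Hst). specialize (Hge s t Hst). lra.
  - specialize (Hle t s ltac:(lra)). specialize (Hge t s ltac:(lra)). lra.
Qed.

Lemma change_of_variable (T1 F1 g dg T2 F2 : R -> R) :
  (forall y, derivable_pt_lim T1 y (F1 y)) ->
  (forall y, derivable_pt_lim g y (dg y)) ->
  (forall y, derivable_pt_lim T2 y (F2 y)) ->
  (forall y, F1 (g y) * dg y = F2 y) ->
  forall x, T1 (g x) - T1 (g 0) = T2 x - T2 0.
Proof.
  intros H1 Hg H2 HF x.
  enough (E : T1 (g x) - T2 x = T1 (g 0) - T2 0) by lra.
  apply (derivable_pt_lim_0_eq (fun y => T1 (g y) - T2 y)). intros y.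
  replace 0 with (F1 (g y) * dg y - F2 y) by (rewrite HF; ring).
  apply derivable_pt_lim_minus; [|apply H2].
  apply (derivable_pt_lim_comp g T1); auto.
Qed.

Lemma derivable_pt_lim_affine c s y : derivable_pt_lim (fun u => c + s * u) y s.
Proof. apply is_derive_Reals. auto_derive; auto; ring. Qed.

Lemma derivable_pt_lim_sqr (g : R -> R) s l :
  derivable_pt_lim g s l -> derivable_pt_lim (fun u => g u ^ 2) s (2 * g s * l).
Proof.
  intros H. replace (2 * g s * l) with (l * g s + g s * l) by ring.
  apply is_derive_Reals. apply (is_derive_ext (fun u => g u * g u)); [intros; simpl; ring|].
  apply is_derive_Reals, derivable_pt_lim_mult; exact H.
Qed.

Lemma increasing_inverse (tau : R -> R) :
  (forall p q, p < q -> tau p < tau q) -> (forall p, continuity_pt tau p) ->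
  (forall t, exists p1 p2, tau p1 <= t <= tau p2) ->
  exists phi : R -> R, (forall t, tau (phi t) = t) /\ (forall p, phi (tau p) = p) /\
    (forall s t, s < t -> phi s < phi t).
Proof.
  intros Hinc Hc Hs.
  assert (Hsurj : forall t, exists p, tau p = t).
  { intros t. destruct (Hs t) as [p1 [p2 Ht]].
    destruct (IVT_gen tau p1 p2 t) as [p [_ Hp]]; [exact Hc| |now exists p].
    unfold Rmin, Rmax. destruct (Rle_dec (tau p1) (tau p2)); lra. }
  set (phi t := proj1_sig (constructive_indefinite_description _ (Hsurj t))).
  assert (Hphi : forall t, tau (phi t) = t)
    by (intros t; unfold phi; now destruct constructive_indefinite_description).
  exists phi. split; [exact Hphi|]. split.
  - intros p. specialize (Hphi (tau p)).
    destruct (Rtotal_order (phi (tau p)) p) as [Hlt|[Heq|Hgt]];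
      [apply Hinc in Hlt|exact Heq|apply Hinc in Hgt]; lra.
  - intros s t Hst. apply Rnot_le_lt. intros Hle.
    destruct (Rle_lt_or_eq_dec _ _ Hle) as [Hlt|Heq].
    + apply Hinc in Hlt. rewrite !Hphi in Hlt. lra.
    + apply (f_equal tau) in Heq. rewrite !Hphi in Heq. lra.
Qed.

Lemma derivable_pt_lim_inverse (tau g phi : R -> R) :
  (forall p, derivable_pt_lim tau p (g p)) -> (forall p, 0 < g p) ->
  (forall t, tau (phi t) = t) -> (forall p, phi (tau p) = p) ->
  forall t, derivable_pt_lim phi t (/ g (phi t)).
Proof.
  intros Hd Hg Htau Hphi t.
  assert (Hinc : forall p q, p < q -> tau p < tau q).
  { intros p q Hpq. apply (derivable_pt_lim_pos_lt tau g); auto. }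
  assert (Hmono : forall s s', s <= s' -> phi s <= phi s').
  { intros s s' Hss'. apply Rnot_lt_le. intros Hlt. apply Hinc in Hlt. rewrite !Htau in Hlt. lra. }
  assert (Prf : forall p, phi (t - 1) <= p <= phi (t + 1) -> derivable_pt tau p)
    by (intros p _; exact (exist _ (g p) (Hd p))).
  assert (Hcont : continuity_pt phi t).
  { apply (continuity_pt_recip_interv tau phi (phi t - 1) (phi t + 1)).
    - lra.
    - intros x y _ Hxy _. now apply Hinc.
    - intros x _ _. apply Htau.
    - intros x Hx1 Hx2. apply Hmono in Hx1, Hx2. rewrite !Hphi in Hx1, Hx2. lra.
    - intros p _. exact (derivable_pt_lim_continuity_pt _ _ _ (Hd p)).
    - rewrite <- (Htau t) at 2 3. split; apply Hinc; lra. }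
  assert (Hbr : phi (t - 1) <= phi t <= phi (t + 1)) by (split; apply Hmono; lra).
  pose proof (derivable_pt_lim_recip_interv tau phi (t - 1) (t + 1) t Prf Hcont
    ltac:(lra) ltac:(lra) Hbr) as K.
  rewrite (derive_pt_eq_0 tau (phi t) (g (phi t)) (Prf (phi t) Hbr) (Hd (phi t))) in K.
  rewrite <- Rdiv_1_l. apply K.
  - intros x _. apply Htau.
  - specialize (Hg (phi t)). lra.
Qed.

Lemma gronwall_zero (Q dQ : R -> R) K :
  (forall t, derivable_pt_lim Q t (dQ t)) -> (forall t, dQ t <= K * Q t) ->
  (forall t, 0 <= Q t) -> Q 0 = 0 -> forall t, 0 <= t -> Q t = 0.
Proof.
  intros Hd Hb Hpos H0 t Ht.
  assert (Hdecr : - (Q 0 * exp (- K * 0)) <= - (Q t * exp (- K * t))).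
  { apply (derivable_pt_lim_nonneg_le (fun s => - (Q s * exp (- K * s)))
      (fun s => - ((dQ s - K * Q s) * exp (- K * s)))); [exact Ht| |].
    - intros c _. apply derivable_pt_lim_opp.
      replace ((dQ c - K * Q c) * exp (- K * c))
        with (dQ c * exp (- K * c) + Q c * (- K * exp (- K * c))) by ring.
      apply (derivable_pt_lim_mult Q (fun s => exp (- K * s))); [apply Hd|].
      apply is_derive_Reals. auto_derive; auto; ring.
    - intros c _. specialize (Hb c). pose proof (exp_pos (- K * c)). nra. }
  rewrite H0 in Hdecr. specialize (Hpos t). pose proof (exp_pos (- K * t)). nra.
Qed.

Lemma second_order_uniqueness (F : R -> R) K (z dz w dw : R -> R) :
  0 <= K ->
  (forall t, derivable_pt_lim z t (dz t)) -> (forall t, derivable_pt_lim dz t (F (z t))) ->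
  (forall t, derivable_pt_lim w t (dw t)) -> (forall t, derivable_pt_lim dw t (F (w t))) ->
  (forall t, Rabs (F (z t) - F (w t)) <= K * Rabs (z t - w t)) ->
  z 0 = w 0 -> dz 0 = dw 0 -> forall t, 0 <= t -> z t = w t /\ dz t = dw t.
Proof.
  intros HK Hz Hdz Hw Hdw HF E0 E1 t Ht.
  set (Q s := (z s - w s) ^ 2 + (dz s - dw s) ^ 2).
  assert (HQ : forall s, derivable_pt_lim Q s
      (2 * (z s - w s) * (dz s - dw s) + 2 * (dz s - dw s) * (F (z s) - F (w s)))).
  { intros s.
    apply (derivable_pt_lim_plus (fun s => (z s - w s) ^ 2) (fun s => (dz s - dw s) ^ 2)).
    - apply (derivable_pt_lim_sqr (fun s => z s - w s)), derivable_pt_lim_minus; auto.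
    - apply (derivable_pt_lim_sqr (fun s => dz s - dw s)), derivable_pt_lim_minus; auto. }
  assert (Hbound : forall s, 2 * (z s - w s) * (dz s - dw s)
      + 2 * (dz s - dw s) * (F (z s) - F (w s)) <= (1 + K) * Q s).
  { intros s. unfold Q. specialize (HF s).
    set (d := z s - w s) in *. set (e := dz s - dw s). set (m := F (z s) - F (w s)) in *.
    pose proof (Rle_abs (2 * d * e)). pose proof (Rle_abs (2 * e * m)).
    rewrite !Rabs_mult, Rabs_right in * by lra.
    rewrite <- (pow2_abs d), <- (pow2_abs e).
    pose proof (Rabs_pos d). pose proof (Rabs_pos e). pose proof (pow2_ge_0 (Rabs d - Rabs e)).
    nra. }
  assert (HQ0 : forall s, 0 <= s -> Q s = 0).
  { apply (gronwall_zero Q _ (1 + K) HQ Hbound).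
    - intros s. unfold Q.
      pose proof (pow2_ge_0 (z s - w s)). pose proof (pow2_ge_0 (dz s - dw s)). lra.
    - unfold Q. rewrite E0, E1. ring. }
  specialize (HQ0 t Ht). unfold Q in HQ0.
  pose proof (pow2_ge_0 (z t - w t)). pose proof (pow2_ge_0 (dz t - dw t)).
  split; nra.
Qed.

Lemma continuity_pt_pos_locally f x : continuity_pt f x -> 0 < f x ->
  exists d, 0 < d /\ forall u, Rabs (u - x) < d -> 0 < f u.
Proof.
  intros H Hp. destruct (H (f x) Hp) as [d [Hd Hdd]].
  exists d. split; [exact Hd|]. intros u Hu.
  destruct (Req_dec u x) as [->|Hne]; [exact Hp|].
  assert (K : R_dist (f u) (f x) < f x) by (apply Hdd; repeat split; auto).
  unfold R_dist in K. apply Rabs_def2 in K. lra.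
Qed.

Lemma derivable_pt_lim_pos_locally f x l : derivable_pt_lim f x l -> 0 < l ->
  exists d, 0 < d /\ forall h, 0 < h < d -> f (x - h) < f x < f (x + h).
Proof.
  intros H Hl. destruct (H l Hl) as [[d Hd] Hdd]. simpl in Hdd.
  exists d. split; [exact Hd|]. intros h Hh. split.
  - specialize (Hdd (- h) ltac:(lra) ltac:(rewrite Rabs_Ropp, Rabs_pos_eq; lra)).
    apply Rabs_def2 in Hdd.
    assert (0 < (f (x + - h) - f x) / - h) by lra.
    replace (x - h) with (x + - h) by ring.
    assert (E : f (x + - h) - f x = (f (x + - h) - f x) / - h * - h) by (field; lra). nra.
  - specialize (Hdd h ltac:(lra) ltac:(rewrite Rabs_pos_eq; lra)). apply Rabs_def2 in Hdd.
    assert (0 < (f (x + h) - f x) / h) by lra.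
    assert (E : f (x + h) - f x = (f (x + h) - f x) / h * h) by (field; lra). nra.
Qed.

Lemma first_zero (f : R -> R) a c :
  (forall x, continuity_pt f x) -> a < c -> 0 < f a -> f c <= 0 ->
  exists s, a < s <= c /\ f s = 0 /\ forall u, a <= u < s -> 0 < f u.
Proof.
  intros Hc Hac Ha Hfc.
  set (S s := a <= s <= c /\ forall u, a <= u <= s -> 0 < f u).
  assert (HSa : S a) by (split; [lra|intros u Hu; now replace u with a by lra]).
  destruct (completeness S) as [s [Hub Hlub]];
    [exists c; intros u [Hu _]; lra|now exists a|].
  assert (Has : a <= s) by now apply Hub.
  assert (Hsc : s <= c) by (apply Hlub; intros u [Hu _]; lra).
  assert (Hbelow : forall u, a <= u < s -> 0 < f u).
  { intros u Hu. apply Rnot_le_lt. intros Hfu.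
    assert (Hbd : is_upper_bound S u).
    { intros v [Hv HSv]. apply Rnot_lt_le. intros Huv. specialize (HSv u ltac:(lra)). lra. }
    specialize (Hlub u Hbd). lra. }
  assert (Hnpos : ~ 0 < f s).
  { intros Hfs. destruct (continuity_pt_pos_locally f s (Hc s) Hfs) as [e [He Hee]].
    assert (s < c) by (destruct (Req_dec s c) as [->|]; lra).
    set (s' := Rmin (s + e / 2) c).
    assert (s < s' <= c /\ s' <= s + e / 2) as [Hs' Hs'e]
      by (unfold s'; split; [split; [apply Rmin_glb_lt|apply Rmin_r]; lra|apply Rmin_l]).
    assert (S s').
    { split; [lra|]. intros u Hu. destruct (Rlt_le_dec u s); [apply Hbelow; lra|].
      apply Hee. rewrite Rabs_pos_eq; lra. }
    specialize (Hub s' ltac:(assumption)). lra. }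
  assert (Hnneg : ~ f s < 0).
  { intros Hfs.
    destruct (continuity_pt_pos_locally (fun u => - f u) s
      (continuity_pt_opp _ _ (Hc s)) ltac:(lra)) as [e [He Hee]].
    assert (a < s) by (destruct (Req_dec a s) as [<-|]; lra).
    set (u := Rmax (s - e / 2) ((a + s) / 2)).
    assert (s - e / 2 <= u /\ (a + s) / 2 <= u < s) as [Hu1 [Hu2 Hu3]]
      by (unfold u; split; [apply Rmax_l|split; [apply Rmax_r|apply Rmax_lub_lt; lra]]).
    specialize (Hbelow u ltac:(lra)). specialize (Hee u ltac:(rewrite Rabs_left; lra)).
    cbv beta in Hee. lra. }
  assert (Hfs : f s = 0) by lra.
  exists s. split; [|split; assumption].
  split; [|exact Hsc]. destruct (Req_dec a s) as [<-|]; lra.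
Qed.

Lemma pos_after_zero (f df : R -> R) t0 b :
  (forall t, derivable_pt_lim f t (df t)) -> f t0 = 0 ->
  (forall t, t0 <= t < b -> f t = 0 -> 0 < df t) ->
  forall t, t0 < t < b -> 0 < f t.
Proof.
  (* f is positive just after t0; at its first zero after that it would be decreasing. *)
  intros Hd Hf0 Hz t1 Ht1. apply Rnot_le_lt. intros Hft1.
  assert (Hc : forall x, continuity_pt f x)
    by (intros x; exact (derivable_pt_lim_continuity_pt _ _ _ (Hd x))).
  destruct (derivable_pt_lim_pos_locally f t0 (df t0) (Hd t0) (Hz t0 ltac:(lra) Hf0))
    as [d [Hd0 Hdd]].
  set (m := Rmin (d / 2) ((t1 - t0) / 2)).
  assert (0 < m <= d / 2 /\ m <= (t1 - t0) / 2) as [Hm1 Hm2]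
    by (unfold m; split; [split; [apply Rmin_pos|apply Rmin_l]|apply Rmin_r]; lra).
  assert (Hfa : 0 < f (t0 + m)) by (destruct (Hdd m ltac:(lra)); lra).
  destruct (first_zero f (t0 + m) t1 Hc ltac:(lra) Hfa Hft1) as [s [Hs [Hfs Hpos]]].
  destruct (derivable_pt_lim_pos_locally f s (df s) (Hd s) (Hz s ltac:(lra) Hfs))
    as [d' [Hd' Hdd']].
  set (h := Rmin (d' / 2) ((s - (t0 + m)) / 2)).
  assert (0 < h <= d' / 2 /\ h <= (s - (t0 + m)) / 2) as [Hh1 Hh2]
    by (unfold h; split; [split; [apply Rmin_pos|apply Rmin_l]|apply Rmin_r]; lra).
  destruct (Hdd' h ltac:(lra)) as [K _]. specialize (Hpos (s - h) ltac:(lra)). lra.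
Qed.

(** * The elliptic integral *)

Definition ell_den (a b p : R) := a ^ 2 * cos p ^ 2 + b ^ 2 * sin p ^ 2.
Definition ell_integrand (a b p : R) := / sqrt (ell_den a b p).
Definition ell_int (a b x : R) := RInt (ell_integrand a b) 0 x.

Lemma ell_den_pos a b p : 0 < a -> 0 < b -> 0 < ell_den a b p.
Proof.
  intros Ha Hb. unfold ell_den. pose proof (sin2_cos2 p) as H. unfold Rsqr in H.
  assert (0 < a ^ 2) by nra. assert (0 < b ^ 2) by nra.
  assert (0 <= cos p ^ 2) by nra. assert (0 <= sin p ^ 2) by nra.
  destruct (Rle_lt_dec (cos p ^ 2) 0); nra.
Qed.

Lemma ell_den_between a b p : 0 < b <= a -> b ^ 2 <= ell_den a b p <= a ^ 2.
Proof.
  intros Hb. unfold ell_den. pose proof (sin2_cos2 p) as H. unfold Rsqr in H.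
  assert (0 <= cos p ^ 2) by nra. assert (0 <= sin p ^ 2) by nra.
  assert (b ^ 2 <= a ^ 2) by nra. simpl in *. split; nra.
Qed.

Lemma ell_den_PI_minus a b p : ell_den a b (PI - p) = ell_den a b p.
Proof. unfold ell_den. rewrite sin_PI_x, cos_minus, cos_PI, sin_PI. ring. Qed.

Lemma ell_den_plus_PI a b p : ell_den a b (PI + p) = ell_den a b p.
Proof. unfold ell_den. rewrite (Rplus_comm PI), neg_sin, neg_cos. ring. Qed.

Lemma ell_den_PI2_minus a b p : ell_den b a (PI / 2 - p) = ell_den a b p.
Proof. unfold ell_den. rewrite sin_shift, cos_shift. ring. Qed.

Lemma ell_integrand_continuous a b p : 0 < a -> 0 < b -> continuous (ell_integrand a b) p.
Proof.
  intros Ha Hb. apply (ex_derive_continuous (ell_integrand a b)). unfold ell_integrand.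
  pose proof (ell_den_pos a b p Ha Hb). unfold ell_den in *. auto_derive.
  split; [lra|]. split; [|auto]. apply Rgt_not_eq, sqrt_lt_R0. lra.
Qed.

Lemma ell_int_derive a b x : 0 < a -> 0 < b ->
  derivable_pt_lim (ell_int a b) x (ell_integrand a b x).
Proof. intros. apply derivable_pt_lim_RInt. intros; now apply ell_integrand_continuous. Qed.

Lemma ell_int_0 a b : ell_int a b 0 = 0.
Proof. apply (RInt_point (V := R_CompleteNormedModule)). Qed.

Lemma ell_int_pos a b x : 0 < a -> 0 < b -> 0 < x -> 0 < ell_int a b x.
Proof.
  intros Ha Hb Hx. rewrite <- (ell_int_0 a b).
  apply (derivable_pt_lim_pos_lt _ (ell_integrand a b)); [exact Hx| |].
  - intros c _. now apply ell_int_derive.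
  - intros c _. apply Rinv_0_lt_compat, sqrt_lt_R0, ell_den_pos; assumption.
Qed.

Lemma ell_int_PI_minus a b x : 0 < a -> 0 < b ->
  ell_int a b (PI - x) = ell_int a b PI - ell_int a b x.
Proof.
  intros Ha Hb.
  pose proof (change_of_variable (ell_int a b) (ell_integrand a b) (fun y => PI + -1 * y)
    (fun _ => -1) (fun y => - ell_int a b y) (fun y => - ell_integrand a b y)) as E.
  specialize (E ltac:(intros; now apply ell_int_derive) ltac:(intros; apply derivable_pt_lim_affine)
    ltac:(intros; apply derivable_pt_lim_opp; now apply ell_int_derive)).
  specialize (E ltac:(intros y; unfold ell_integrand;
    replace (PI + -1 * y) with (PI - y) by ring; rewrite ell_den_PI_minus; ring) x).
  cbv beta in E. replace (PI + -1 * 0) with PI in E by ring.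
  replace (PI + -1 * x) with (PI - x) in E by ring. rewrite ell_int_0 in E. lra.
Qed.

Lemma ell_int_plus_PI a b x : 0 < a -> 0 < b ->
  ell_int a b (PI + x) = ell_int a b PI + ell_int a b x.
Proof.
  intros Ha Hb.
  pose proof (change_of_variable (ell_int a b) (ell_integrand a b) (fun y => PI + 1 * y)
    (fun _ => 1) (ell_int a b) (ell_integrand a b)) as E.
  specialize (E ltac:(intros; now apply ell_int_derive) ltac:(intros; apply derivable_pt_lim_affine)
    ltac:(intros; now apply ell_int_derive)).
  specialize (E ltac:(intros y; unfold ell_integrand;
    replace (PI + 1 * y) with (PI + y) by ring; rewrite ell_den_plus_PI; ring) x).
  cbv beta in E. replace (PI + 1 * 0) with PI in E by ring.
  replace (PI + 1 * x) with (PI + x) in E by ring. rewrite ell_int_0 in E. lra.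
Qed.

Lemma ell_int_PI a b : 0 < a -> 0 < b -> ell_int a b PI = 2 * ell_int a b (PI / 2).
Proof.
  intros Ha Hb. pose proof (ell_int_PI_minus a b (PI / 2) Ha Hb) as E.
  replace (PI - PI / 2) with (PI / 2) in E by field. lra.
Qed.

Lemma ell_int_swap a b : 0 < a -> 0 < b -> ell_int b a (PI / 2) = ell_int a b (PI / 2).
Proof.
  intros Ha Hb.
  pose proof (change_of_variable (ell_int b a) (ell_integrand b a) (fun y => PI / 2 + -1 * y)
    (fun _ => -1) (fun y => - ell_int a b y) (fun y => - ell_integrand a b y)) as E.
  specialize (E ltac:(intros; now apply ell_int_derive) ltac:(intros; apply derivable_pt_lim_affine)
    ltac:(intros; apply derivable_pt_lim_opp; now apply ell_int_derive)).
  specialize (E ltac:(intros y; unfold ell_integrand;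
    replace (PI / 2 + -1 * y) with (PI / 2 - y) by ring; rewrite ell_den_PI2_minus; ring) (PI / 2)).
  cbv beta in E. replace (PI / 2 + -1 * (PI / 2)) with 0 in E by ring.
  replace (PI / 2 + -1 * 0) with (PI / 2) in E by ring.
  rewrite !ell_int_0 in E. lra.
Qed.

Lemma ell_integrand_between a b p : 0 < b <= a -> / a <= ell_integrand a b p <= / b.
Proof.
  intros Hb. destruct (ell_den_between a b p Hb) as [H1 H2]. unfold ell_integrand.
  apply sqrt_le_1_alt in H1, H2. rewrite sqrt_pow2 in H1, H2 by lra.
  split; apply Rinv_le_contravar; lra.
Qed.

Lemma ell_int_sub_between a b x y : 0 < b <= a -> y <= x ->
  (x - y) / a <= ell_int a b x - ell_int a b y <= (x - y) / b.
Proof.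
  intros Hb Hyx. unfold Rdiv. split.
  - enough (ell_int a b y - y * / a <= ell_int a b x - x * / a) by lra.
    apply (derivable_pt_lim_nonneg_le (fun u => ell_int a b u - u * / a)
      (fun u => ell_integrand a b u - / a)); auto.
    + intros c _. apply derivable_pt_lim_minus; [apply ell_int_derive; lra|].
      apply is_derive_Reals. auto_derive; auto; ring.
    + intros c _. pose proof (ell_integrand_between a b c Hb). lra.
  - enough (y * / b - ell_int a b y <= x * / b - ell_int a b x) by lra.
    apply (derivable_pt_lim_nonneg_le (fun u => u * / b - ell_int a b u)
      (fun u => / b - ell_integrand a b u)); auto.
    + intros c _. apply derivable_pt_lim_minus; [|apply ell_int_derive; lra].
      apply is_derive_Reals. auto_derive; auto; ring.
    + intros c _. pose proof (ell_integrand_between a b c Hb). lra.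
Qed.

Lemma ell_int_antitone a b a' b' x : 0 < a <= a' -> 0 < b <= b' -> 0 <= x ->
  ell_int a' b' x <= ell_int a b x.
Proof.
  intros Ha Hb Hx.
  enough (ell_int a b 0 - ell_int a' b' 0 <= ell_int a b x - ell_int a' b' x)
    by (rewrite !ell_int_0 in *; lra).
  apply (derivable_pt_lim_nonneg_le (fun u => ell_int a b u - ell_int a' b' u)
    (fun u => ell_integrand a b u - ell_integrand a' b' u)); auto.
  - intros c _. apply derivable_pt_lim_minus; apply ell_int_derive; lra.
  - intros c _. unfold ell_integrand.
    assert (Hpos : 0 < ell_den a b c) by (apply ell_den_pos; lra).
    assert (ell_den a b c <= ell_den a' b' c).
    { unfold ell_den. pose proof (sin2_cos2 c) as H. unfold Rsqr in H.
      assert (0 <= cos c ^ 2) by nra. assert (0 <= sin c ^ 2) by nra.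
      assert (a ^ 2 <= a' ^ 2) by nra. assert (b ^ 2 <= b' ^ 2) by nra. nra. }
    assert (0 < sqrt (ell_den a b c)) by now apply sqrt_lt_R0.
    assert (sqrt (ell_den a b c) <= sqrt (ell_den a' b' c)) by now apply sqrt_le_1_alt.
    enough (/ sqrt (ell_den a' b' c) <= / sqrt (ell_den a b c)) by lra.
    apply Rinv_le_contravar; lra.
Qed.

(** * Landen's transformation and the AGM *)

(* Landen's substitution theta |-> phi, with cos phi = landen_cos and sin phi = landen_sin.
   The angle is defined by integrating phi' = 1 + a b / ell_den rather than through an
   inverse trigonometric function, which would need a choice of branch. *)
Definition landen_angle (a b x : R) := x + RInt (fun u => a * b / ell_den a b u) 0 x.
Definition landen_cos (a b x : R) := (a * cos x ^ 2 - b * sin x ^ 2) / sqrt (ell_den a b x).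
Definition landen_sin (a b x : R) := (a + b) * sin x * cos x / sqrt (ell_den a b x).

Ltac landen_field a b x :=
  fold (ell_den a b x);
  replace (a * (a * 1) * (cos x * (cos x * 1)) + b * (b * 1) * (sin x * (sin x * 1)))
    with (ell_den a b x) by (unfold ell_den; ring);
  pose proof (ell_den_pos a b x ltac:(lra) ltac:(lra)) as Hden;
  pose proof (pow2_sqrt (ell_den a b x) ltac:(lra)) as Hsqrt;
  pose proof (sqrt_lt_R0 (ell_den a b x) Hden) as Hsqrt_pos;
  pose proof (sin2_cos2 x) as Hsc; unfold Rsqr in Hsc;
  set (r := sqrt (ell_den a b x)) in *; clearbody r;
  unfold ell_den in *; field_simplify_eq; [rewrite ?Hsqrt; clear Hsqrt; simpl; nsatz|];
  repeat split; lra.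

Lemma landen_cos_derive a b x : 0 < a -> 0 < b ->
  derivable_pt_lim (landen_cos a b) x (- (1 + a * b / ell_den a b x) * landen_sin a b x).
Proof.
  intros Ha Hb. pose proof (ell_den_pos a b x Ha Hb) as Hh. apply is_derive_Reals.
  unfold landen_cos, landen_sin, ell_den in Hh |- *. auto_derive.
  - split; [lra|]. split; [|auto]. apply Rgt_not_eq, sqrt_lt_R0. lra.
  - landen_field a b x.
Qed.

Lemma landen_sin_derive a b x : 0 < a -> 0 < b ->
  derivable_pt_lim (landen_sin a b) x ((1 + a * b / ell_den a b x) * landen_cos a b x).
Proof.
  intros Ha Hb. pose proof (ell_den_pos a b x Ha Hb) as Hh. apply is_derive_Reals.
  unfold landen_cos, landen_sin, ell_den in Hh |- *. auto_derive.
  - split; [lra|]. split; [|auto]. apply Rgt_not_eq, sqrt_lt_R0. lra.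
  - landen_field a b x.
Qed.

Lemma landen_cos_sin_norm a b x : 0 < a -> 0 < b ->
  landen_cos a b x ^ 2 + landen_sin a b x ^ 2 = 1.
Proof.
  intros Ha Hb. unfold landen_cos, landen_sin.
  pose proof (ell_den_pos a b x Ha Hb) as Hden.
  pose proof (pow2_sqrt (ell_den a b x) ltac:(lra)) as Hsqrt.
  pose proof (sqrt_lt_R0 (ell_den a b x) Hden) as Hsqrt_pos.
  pose proof (sin2_cos2 x) as Hsc. unfold Rsqr in Hsc.
  set (r := sqrt (ell_den a b x)) in *. clearbody r. unfold ell_den in *.
  field_simplify_eq; [|lra]. rewrite Hsqrt. clear Hsqrt. simpl. nsatz.
Qed.

Lemma landen_angle_derive a b x : 0 < a -> 0 < b ->
  derivable_pt_lim (landen_angle a b) x (1 + a * b / ell_den a b x).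
Proof.
  intros Ha Hb. apply derivable_pt_lim_plus; [apply derivable_pt_lim_id|].
  apply (derivable_pt_lim_RInt (fun u => a * b / ell_den a b u)). intros u.
  apply (ex_derive_continuous (fun u => a * b / ell_den a b u)).
  pose proof (ell_den_pos a b u Ha Hb). unfold ell_den in *. auto_derive. lra.
Qed.

Lemma landen_angle_0 a b : landen_angle a b 0 = 0.
Proof.
  unfold landen_angle. rewrite (RInt_point (V := R_CompleteNormedModule)).
  unfold zero; simpl. ring.
Qed.

Lemma rotation_invariants (p dp u v : R -> R) :
  (forall y, derivable_pt_lim p y (dp y)) ->
  (forall y, derivable_pt_lim u y (- dp y * v y)) ->
  (forall y, derivable_pt_lim v y (dp y * u y)) ->
  forall s t,
    cos (p s) * u s + sin (p s) * v s = cos (p t) * u t + sin (p t) * v t /\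
    sin (p s) * u s - cos (p s) * v s = sin (p t) * u t - cos (p t) * v t.
Proof.
  intros Hp Hu Hv s t.
  assert (Hc : forall y, derivable_pt_lim (fun y => cos (p y)) y (- sin (p y) * dp y)).
  { intros y. apply (derivable_pt_lim_comp p cos), derivable_pt_lim_cos. apply Hp. }
  assert (Hs : forall y, derivable_pt_lim (fun y => sin (p y)) y (cos (p y) * dp y)).
  { intros y. apply (derivable_pt_lim_comp p sin), derivable_pt_lim_sin. apply Hp. }
  split.
  - apply (derivable_pt_lim_0_eq (fun y => cos (p y) * u y + sin (p y) * v y)). intros y.
    replace 0 with ((- sin (p y) * dp y) * u y + cos (p y) * (- dp y * v y)
                    + ((cos (p y) * dp y) * v y + sin (p y) * (dp y * u y))) by ring.
    apply (derivable_pt_lim_plus (fun y => cos (p y) * u y) (fun y => sin (p y) * v y)).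
    + apply (derivable_pt_lim_mult (fun y => cos (p y)) u); auto.
    + apply (derivable_pt_lim_mult (fun y => sin (p y)) v); auto.
  - apply (derivable_pt_lim_0_eq (fun y => sin (p y) * u y - cos (p y) * v y)). intros y.
    replace 0 with ((cos (p y) * dp y) * u y + sin (p y) * (- dp y * v y)
                    - ((- sin (p y) * dp y) * v y + cos (p y) * (dp y * u y))) by ring.
    apply (derivable_pt_lim_minus (fun y => sin (p y) * u y) (fun y => cos (p y) * v y)).
    + apply (derivable_pt_lim_mult (fun y => sin (p y)) u); auto.
    + apply (derivable_pt_lim_mult (fun y => cos (p y)) v); auto.
Qed.

Lemma landen_angle_cos_sin a b x : 0 < a -> 0 < b ->
  cos (landen_angle a b x) = landen_cos a b x /\ sin (landen_angle a b x) = landen_sin a b x.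
Proof.
  intros Ha Hb.
  destruct (rotation_invariants (landen_angle a b) (fun y => 1 + a * b / ell_den a b y)
    (landen_cos a b) (landen_sin a b)) with (s := x) (t := 0) as [E1 E2].
  - intros y. now apply landen_angle_derive.
  - intros y. now apply landen_cos_derive.
  - intros y. now apply landen_sin_derive.
  - assert (Hc0 : landen_cos a b 0 = 1).
    { unfold landen_cos, ell_den. rewrite cos_0, sin_0.
      replace (a ^ 2 * 1 ^ 2 + b ^ 2 * 0 ^ 2) with (a ^ 2) by ring.
      rewrite sqrt_pow2 by lra. field. lra. }
    assert (Hs0 : landen_sin a b 0 = 0) by (unfold landen_sin; rewrite sin_0; lra).
    rewrite landen_angle_0, cos_0, sin_0, Hc0, Hs0 in E1, E2.
    pose proof (landen_cos_sin_norm a b x Ha Hb). pose proof (sin2_cos2 (landen_angle a b x)).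
    unfold Rsqr in *. simpl in *. split; nsatz.
Qed.

Lemma landen_integrand a b x : 0 < a -> 0 < b ->
  ell_integrand ((a + b) / 2) (sqrt (a * b)) (landen_angle a b x) * (1 + a * b / ell_den a b x)
  = 2 * ell_integrand a b x.
Proof.
  intros Ha Hb.
  destruct (landen_angle_cos_sin a b x Ha Hb) as [Ec Es].
  unfold ell_integrand at 1, ell_den at 1. rewrite Ec, Es, pow2_sqrt by nra.
  unfold landen_cos, landen_sin, ell_integrand.
  pose proof (ell_den_pos a b x Ha Hb) as Hden.
  pose proof (sqrt_sqrt (ell_den a b x) ltac:(lra)) as Hsqrt.
  pose proof (sqrt_lt_R0 (ell_den a b x) Hden) as Hr.
  set (r := sqrt (ell_den a b x)) in *. clearbody r.
  set (K := a * cos x ^ 2 + b * sin x ^ 2).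
  assert (HK : ell_den a b x + a * b = (a + b) * K).
  { pose proof (sin2_cos2 x). unfold Rsqr, K, ell_den in *. simpl. nsatz. }
  assert (HK0 : 0 < K) by nra.
  replace (((a + b) / 2) ^ 2 * ((a * cos x ^ 2 - b * sin x ^ 2) / r) ^ 2 +
           a * b * ((a + b) * sin x * cos x / r) ^ 2) with (((a + b) * K / (2 * r)) ^ 2).
  2: { pose proof (sin2_cos2 x). unfold Rsqr, K in *. field_simplify_eq; [|lra]. simpl. nsatz. }
  rewrite sqrt_pow2 by (apply Rlt_le, Rdiv_lt_0_compat; nra).
  rewrite <- Hsqrt in HK |- *.
  replace (1 + a * b / (r * r)) with ((a + b) * K / (r * r)) by (rewrite <- HK; field; lra).
  field. repeat split; nra.
Qed.

Lemma landen_sin_pos a b x : 0 < a -> 0 < b -> 0 < x < PI / 2 -> 0 < landen_sin a b x.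
Proof.
  intros Ha Hb Hx. pose proof PI_RGT_0.
  assert (0 < sin x) by (apply sin_gt_0; lra).
  assert (0 < cos x) by (apply cos_gt_0; lra).
  apply Rdiv_lt_0_compat; [|apply sqrt_lt_R0, ell_den_pos; assumption].
  apply Rmult_lt_0_compat; [|assumption]. nra.
Qed.

(* [sin] of the Landen angle stays positive on (0, pi/2), so the angle cannot reach [PI]
   before [PI / 2]; together with [cos] = -1 at [PI / 2] this pins the value. *)
Lemma landen_angle_PI2 a b : 0 < a -> 0 < b -> landen_angle a b (PI / 2) = PI.
Proof.
  intros Ha Hb. pose proof PI_RGT_0.
  assert (Hd : forall y, derivable_pt_lim (landen_angle a b) y (1 + a * b / ell_den a b y))
    by (intros; now apply landen_angle_derive).
  assert (Hpos : 0 < landen_angle a b (PI / 2)).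
  { rewrite <- (landen_angle_0 a b).
    apply (derivable_pt_lim_pos_lt _ (fun y => 1 + a * b / ell_den a b y)); [lra|auto|].
    intros c _. pose proof (ell_den_pos a b c Ha Hb).
    assert (0 < a * b / ell_den a b c) by (apply Rdiv_lt_0_compat; nra). lra. }
  assert (Hcos : cos (landen_angle a b (PI / 2)) = -1).
  { rewrite (proj1 (landen_angle_cos_sin a b _ Ha Hb)).
    unfold landen_cos, ell_den. rewrite cos_PI2, sin_PI2.
    replace (a ^ 2 * 0 ^ 2 + b ^ 2 * 1 ^ 2) with (b ^ 2) by ring.
    rewrite sqrt_pow2 by lra. field. lra. }
  assert (Hle : landen_angle a b (PI / 2) <= PI).
  { apply Rnot_lt_le. intros Hgt.
    destruct (IVT_interv (fun y => landen_angle a b y - PI) 0 (PI / 2)) as [z [Hz Ez]];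
      [|lra|rewrite landen_angle_0; lra|lra|].
    - intros y _. apply continuity_pt_minus; [|apply continuity_pt_const; now intros ? ?].
      exact (derivable_pt_lim_continuity_pt _ _ _ (Hd y)).
    - assert (z <> 0) by (intros ->; rewrite landen_angle_0 in Ez; lra).
      assert (z <> PI / 2) by (intros ->; lra).
      pose proof (landen_sin_pos a b z Ha Hb ltac:(lra)).
      rewrite <- (proj2 (landen_angle_cos_sin a b z Ha Hb)) in *.
      replace (landen_angle a b z) with PI in * by lra. rewrite sin_PI in *. lra. }
  destruct (Req_dec (landen_angle a b (PI / 2)) PI) as [E|Hne]; [exact E|].
  assert (cos PI < cos (landen_angle a b (PI / 2))) by (apply cos_decreasing_1; lra).
  rewrite cos_PI in *. lra.
Qed.

Lemma landen a b : 0 < a -> 0 < b ->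
  ell_int ((a + b) / 2) (sqrt (a * b)) (PI / 2) = ell_int a b (PI / 2).
Proof.
  intros Ha Hb.
  assert (Ha1 : 0 < (a + b) / 2) by lra.
  assert (Hb1 : 0 < sqrt (a * b)) by (apply sqrt_lt_R0; nra).
  pose proof (change_of_variable (ell_int ((a + b) / 2) (sqrt (a * b)))
    (ell_integrand ((a + b) / 2) (sqrt (a * b))) (landen_angle a b)
    (fun y => 1 + a * b / ell_den a b y) (fun y => 2 * ell_int a b y)
    (fun y => 2 * ell_integrand a b y)) as E.
  specialize (E ltac:(intros; now apply ell_int_derive)
    ltac:(intros; now apply landen_angle_derive)
    ltac:(intros; apply derivable_pt_lim_scal; now apply ell_int_derive)
    ltac:(intros; now apply landen_integrand) (PI / 2)).
  rewrite landen_angle_PI2, landen_angle_0, ell_int_PI, !ell_int_0 in E by assumption. lra.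
Qed.

Lemma agm_iter_S a b n : agm_iter a b (S n) =
  ((fst (agm_iter a b n) + snd (agm_iter a b n)) / 2,
   sqrt (fst (agm_iter a b n) * snd (agm_iter a b n))).
Proof. reflexivity. Qed.

Lemma agm_iter_pos a b n : 0 < a -> 0 < b ->
  0 < fst (agm_iter a b n) /\ 0 < snd (agm_iter a b n).
Proof.
  intros Ha Hb. induction n as [|n [IH1 IH2]]; simpl; [lra|].
  split; [lra|]. apply sqrt_lt_R0. nra.
Qed.

Lemma sqrt_mult_le_mean x y : 0 <= x -> 0 <= y -> sqrt (x * y) <= (x + y) / 2.
Proof.
  intros Hx Hy. rewrite <- (sqrt_pow2 ((x + y) / 2)) by lra.
  apply sqrt_le_1_alt. pose proof (pow2_ge_0 (x - y)). nra.
Qed.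

Lemma agm_iter_snd_le_fst a b n : 0 < a -> 0 < b ->
  snd (agm_iter a b (S n)) <= fst (agm_iter a b (S n)).
Proof.
  intros Ha Hb. rewrite agm_iter_S. destruct (agm_iter_pos a b n Ha Hb).
  apply sqrt_mult_le_mean; lra.
Qed.

Lemma agm_iter_gap a b n : 0 < a -> 0 < b ->
  fst (agm_iter a b (S (S n))) - snd (agm_iter a b (S (S n))) <=
  (fst (agm_iter a b (S n)) - snd (agm_iter a b (S n))) / 2.
Proof.
  intros Ha Hb. pose proof (agm_iter_snd_le_fst a b n Ha Hb).
  destruct (agm_iter_pos a b (S n) Ha Hb).
  rewrite (agm_iter_S a b (S n)). cbn [fst snd].
  set (x := fst (agm_iter a b (S n))) in *. set (y := snd (agm_iter a b (S n))) in *.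
  enough (y <= sqrt (x * y)) by lra.
  rewrite <- (sqrt_pow2 y) at 1 by lra. apply sqrt_le_1_alt. nra.
Qed.

Lemma ell_int_agm_iter a b n : 0 < a -> 0 < b ->
  ell_int (fst (agm_iter a b n)) (snd (agm_iter a b n)) (PI / 2) = ell_int a b (PI / 2).
Proof.
  intros Ha Hb. induction n as [|n IH]; [reflexivity|].
  rewrite agm_iter_S. cbn [fst snd]. rewrite <- IH.
  destruct (agm_iter_pos a b n Ha Hb). now apply landen.
Qed.

Lemma ell_int_PI2_bracket a b : 0 < b <= a ->
  b <= PI / (2 * ell_int a b (PI / 2)) <= a.
Proof.
  intros Hb. pose proof PI_RGT_0.
  pose proof (ell_int_sub_between a b (PI / 2) 0 Hb ltac:(lra)) as Hj.
  rewrite ell_int_0, !Rminus_0_r in Hj.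
  set (j := ell_int a b (PI / 2)) in *.
  assert (0 < j) by (apply ell_int_pos; lra).
  assert (b * (2 * j) <= PI) by (replace PI with (PI / 2 / b * (2 * b)) by (field; lra); nra).
  assert (PI <= a * (2 * j)) by (replace PI with (PI / 2 / a * (2 * a)) by (field; lra); nra).
  assert (PI / (2 * j) * (2 * j) = PI) by (field; lra).
  split; nra.
Qed.

Lemma AGM_ell_int a b : 0 < a -> 0 < b -> AGM a b = PI / (2 * ell_int a b (PI / 2)).
Proof.
  intros Ha Hb.
  set (c := PI / (2 * ell_int a b (PI / 2))).
  set (u n := fst (agm_iter a b (S n))). set (v n := snd (agm_iter a b (S n))).
  assert (Hbracket : forall n, v n <= c <= u n).
  { intros n. pose proof (agm_iter_snd_le_fst a b n Ha Hb).
    destruct (agm_iter_pos a b (S n) Ha Hb).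
    unfold c, u, v. rewrite <- (ell_int_agm_iter a b (S n)) by assumption.
    apply ell_int_PI2_bracket. lra. }
  set (d := u O - v O).
  assert (Hgap : forall n, u n - v n <= d * (/ 2) ^ n).
  { induction n as [|n IH]; [unfold d; simpl; lra|].
    pose proof (agm_iter_gap a b n Ha Hb). unfold u, v in *. simpl pow. lra. }
  assert (Hlim : is_lim_seq u c).
  { apply is_lim_seq_le_le with (u := fun _ => c) (w := fun n => c + d * (/ 2) ^ n).
    - intros n. specialize (Hbracket n). specialize (Hgap n). lra.
    - apply is_lim_seq_const.
    - replace (Finite c) with (Finite (c + d * 0)) by (f_equal; ring).
      apply is_lim_seq_plus'; [apply is_lim_seq_const|].
      apply (is_lim_seq_scal_l _ d 0), is_lim_seq_geom. rewrite Rabs_pos_eq; lra. }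
  unfold AGM. rewrite (is_lim_seq_unique _ c); [reflexivity|].
  now apply is_lim_seq_incr_1.
Qed.

(** * The system and its explicit solution *)

Definition z_force (u : R) := - 2 * u * (1 - u ^ 2).

Lemma solves_system_xy_const x y z : solves_system x y z ->
  forall t, x t * y t = x 0 * y 0.
Proof.
  intros Hs t. apply (derivable_pt_lim_0_eq (fun t => x t * y t)). clear t. intros t.
  destruct (Hs t) as [Hx [Hy _]].
  replace 0 with (- (x t * z t) * y t + x t * (y t * z t)) by ring.
  now apply derivable_pt_lim_mult.
Qed.

Lemma solves_system_norm_const x y z : solves_system x y z ->
  forall t, x t ^ 2 + y t ^ 2 + z t ^ 2 = x 0 ^ 2 + y 0 ^ 2 + z 0 ^ 2.
Proof.
  intros Hs t. apply (derivable_pt_lim_0_eq (fun t => x t ^ 2 + y t ^ 2 + z t ^ 2)).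
  clear t. intros t.
  destruct (Hs t) as [Hx [Hy Hz]].
  replace 0 with (2 * x t * - (x t * z t) + 2 * y t * (y t * z t)
                  + 2 * z t * (x t ^ 2 - y t ^ 2)) by ring.
  repeat apply derivable_pt_lim_plus; now apply derivable_pt_lim_sqr.
Qed.

Lemma solves_system_z_second_order x y z : solves_system x y z ->
  (forall t, x t ^ 2 + y t ^ 2 + z t ^ 2 = 1) ->
  forall t, derivable_pt_lim (fun t => x t ^ 2 - y t ^ 2) t (z_force (z t)).
Proof.
  intros Hs Hn t. destruct (Hs t) as [Hx [Hy _]].
  replace (z_force (z t)) with (2 * x t * - (x t * z t) - 2 * y t * (y t * z t)).
  - apply (derivable_pt_lim_minus (fun t => x t ^ 2) (fun t => y t ^ 2));
      now apply derivable_pt_lim_sqr.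
  - unfold z_force. specialize (Hn t). replace (1 - z t ^ 2) with (x t ^ 2 + y t ^ 2) by lra.
    ring.
Qed.

Lemma z_force_lipschitz u v : Rabs u <= 1 -> Rabs v <= 1 ->
  Rabs (z_force u - z_force v) <= 4 * Rabs (u - v).
Proof.
  intros Hu Hv. apply Rabs_le_between in Hu, Hv.
  replace (z_force u - z_force v) with ((u - v) * (2 * (u * u + u * v + v * v) - 2))
    by (unfold z_force; ring).
  rewrite Rabs_mult, Rmult_comm. apply Rmult_le_compat_r; [apply Rabs_pos|].
  apply Rabs_le. split; nra.
Qed.

(* [beta_of a] is the second argument of the AGM in [L_of a]; the explicit solution
   [sqrt (1 - 2 a^2) * sin phi] passes the angle [phi] at time [phase_time a phi]. *)
Definition beta_of (a : R) := / 2 * sqrt (1 + 2 * a ^ 2).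
Definition phase_time (a p : R) := / 2 * ell_int (beta_of a) a p.
Definition quarter_period (a : R) := phase_time a (PI / 2).

Lemma beta_of_sqr a : beta_of a ^ 2 = (1 + 2 * a ^ 2) / 4.
Proof.
  unfold beta_of. rewrite Rpow_mult_distr, pow2_sqrt by (pose proof (pow2_ge_0 a); lra).
  field.
Qed.

Lemma beta_of_pos a : 0 < beta_of a.
Proof.
  unfold beta_of. apply Rmult_lt_0_compat; [lra|].
  apply sqrt_lt_R0. pose proof (pow2_ge_0 a). lra.
Qed.

Lemma beta_of_ge a : 0 < a -> 2 * a ^ 2 < 1 -> a <= beta_of a.
Proof.
  intros Ha Ha2. pose proof (beta_of_sqr a). pose proof (beta_of_pos a).
  apply Rnot_lt_le. intros Hlt. assert (beta_of a ^ 2 < a ^ 2) by nra. lra.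
Qed.

Lemma beta_of_le a a' : 0 < a <= a' -> beta_of a <= beta_of a'.
Proof.
  intros Ha. unfold beta_of. apply Rmult_le_compat_l; [lra|].
  apply sqrt_le_1_alt. nra.
Qed.

Lemma L_of_ell_int a : 0 < a -> L_of a = 2 * ell_int a (beta_of a) (PI / 2).
Proof.
  intros Ha. unfold L_of. fold (beta_of a). pose proof (beta_of_pos a). pose proof PI_RGT_0.
  rewrite AGM_ell_int by assumption.
  pose proof (ell_int_pos a (beta_of a) (PI / 2) Ha ltac:(assumption) ltac:(lra)).
  field. lra.
Qed.

Lemma L_of_quarter_period a : 0 < a -> L_of a = 4 * quarter_period a.
Proof.
  intros Ha. rewrite L_of_ell_int by assumption. unfold quarter_period, phase_time.
  rewrite ell_int_swap by (pose proof (beta_of_pos a); lra). field.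
Qed.

Lemma L_of_antitone a a' : 0 < a <= a' -> L_of a' <= L_of a.
Proof.
  intros Ha. rewrite !L_of_ell_int by lra.
  pose proof (beta_of_pos a). pose proof (beta_of_le a a' Ha). pose proof PI_RGT_0.
  enough (ell_int a' (beta_of a') (PI / 2) <= ell_int a (beta_of a) (PI / 2)) by lra.
  apply ell_int_antitone; lra.
Qed.

Lemma phase_time_derive a p : 0 < a ->
  derivable_pt_lim (phase_time a) p (/ (2 * sqrt (ell_den (beta_of a) a p))).
Proof.
  intros Ha. pose proof (beta_of_pos a).
  pose proof (sqrt_lt_R0 _ (ell_den_pos (beta_of a) a p ltac:(assumption) Ha)).
  replace (/ (2 * sqrt (ell_den (beta_of a) a p)))
    with (/ 2 * ell_integrand (beta_of a) a p) by (unfold ell_integrand; field; lra).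
  apply derivable_pt_lim_scal. now apply ell_int_derive.
Qed.

Lemma phase_exists a : 0 < a -> 2 * a ^ 2 < 1 ->
  exists phi : R -> R, (forall t, phase_time a (phi t) = t) /\
    (forall p, phi (phase_time a p) = p) /\ (forall s t, s < t -> phi s < phi t) /\
    (forall t, derivable_pt_lim phi t (2 * sqrt (ell_den (beta_of a) a (phi t)))).
Proof.
  intros Ha Ha2. pose proof (beta_of_pos a). pose proof (beta_of_ge a Ha Ha2).
  set (g p := / (2 * sqrt (ell_den (beta_of a) a p))).
  assert (Hg : forall p, 0 < g p).
  { intros p. apply Rinv_0_lt_compat, Rmult_lt_0_compat; [lra|].
    apply sqrt_lt_R0, ell_den_pos; assumption. }
  assert (Hd : forall p, derivable_pt_lim (phase_time a) p (g p))
    by (intros; now apply phase_time_derive).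
  destruct (increasing_inverse (phase_time a)) as [phi [Hphi1 [Hphi2 Hinc]]].
  - intros p q Hpq. apply (derivable_pt_lim_pos_lt _ g); auto.
  - intros p. exact (derivable_pt_lim_continuity_pt _ _ _ (Hd p)).
  - intros t. unfold phase_time.
    pose proof (ell_int_sub_between (beta_of a) a (2 * beta_of a * t) 0) as Hb.
    pose proof (ell_int_sub_between (beta_of a) a 0 (2 * beta_of a * t)) as Hb'.
    rewrite ell_int_0 in Hb, Hb'.
    replace ((2 * beta_of a * t - 0) / beta_of a) with (2 * t) in Hb by (field; lra).
    replace ((0 - 2 * beta_of a * t) / beta_of a) with (- (2 * t)) in Hb' by (field; lra).
    destruct (Rle_lt_dec 0 t).
    + exists 0, (2 * beta_of a * t). rewrite ell_int_0.
      specialize (Hb ltac:(lra) ltac:(nra)). lra.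
    + exists (2 * beta_of a * t), 0. rewrite ell_int_0.
      specialize (Hb' ltac:(lra) ltac:(nra)). lra.
  - exists phi. repeat split; try assumption. intros t.
    replace (2 * sqrt (ell_den (beta_of a) a (phi t))) with (/ g (phi t))
      by (unfold g; rewrite Rinv_inv; reflexivity).
    apply (derivable_pt_lim_inverse (phase_time a)); assumption.
Qed.

Lemma phase_time_multiples a : 0 < a ->
  phase_time a 0 = 0 /\ phase_time a PI = 2 * quarter_period a /\
  phase_time a (PI + PI / 2) = 3 * quarter_period a /\
  phase_time a (PI + PI) = 4 * quarter_period a.
Proof.
  intros Ha. pose proof (beta_of_pos a). unfold quarter_period, phase_time.
  rewrite ell_int_0, !ell_int_plus_PI, ell_int_PI by assumption. repeat split; ring.
Qed.
Lemma model_velocity_derive a k p : 0 < a -> k ^ 2 = 1 - 2 * a ^ 2 ->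
  derivable_pt_lim (fun p => k * cos p * (2 * sqrt (ell_den (beta_of a) a p))) p
    (z_force (k * sin p) / (2 * sqrt (ell_den (beta_of a) a p))).
Proof.
  intros Ha Hk. pose proof (beta_of_pos a) as Hb. pose proof (beta_of_sqr a) as Hb2.
  set (b := beta_of a) in *. clearbody b.
  pose proof (ell_den_pos b a p Hb Ha) as Hden.
  apply is_derive_Reals. unfold z_force, ell_den.
  auto_derive; [unfold ell_den in Hden; simpl in Hden; lra|].
  fold (ell_den b a p).
  replace (b * (b * 1) * (cos p * (cos p * 1)) + a * (a * 1) * (sin p * (sin p * 1)))
    with (ell_den b a p) by (unfold ell_den; ring).
  pose proof (sqrt_sqrt (ell_den b a p) ltac:(lra)) as Hsqrt.
  pose proof (sqrt_lt_R0 (ell_den b a p) Hden) as Hr.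
  pose proof (sin2_cos2 p) as Hsc. unfold Rsqr in Hsc.
  set (r := sqrt (ell_den b a p)) in *. clearbody r. unfold ell_den in *.
  field_simplify_eq; [|lra].
  replace (r ^ 2) with (r * r) by ring. rewrite Hsqrt.
  replace (cos p ^ 2) with (1 - sin p ^ 2) by nra. replace (k ^ 3) with (k * k ^ 2) by ring.
  rewrite Hk, Hb2. field.
Qed.

Record period_profile (Q : R) (z dz : R -> R) : Prop := {
  profile_Q_pos : 0 < Q;
  profile_z_0 : z 0 = 0;
  profile_rise : forall t, 0 <= t < Q -> 0 < dz t;
  profile_dz_Q : dz Q = 0;
  profile_fall : forall t, Q < t < 3 * Q -> dz t < 0;
  profile_dz_3Q : dz (3 * Q) = 0;
  profile_rise_again : forall t, 3 * Q < t < 4 * Q -> 0 < dz t;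
  profile_neg : forall t, 2 * Q < t < 4 * Q -> z t < 0;
  profile_z_4Q : z (4 * Q) = 0 }.

Lemma period_profile_ext Q z dz w dw :
  (forall t, 0 <= t -> z t = w t /\ dz t = dw t) ->
  period_profile Q w dw -> period_profile Q z dz.
Proof.
  intros E [HQ H0 H1 H2 H3 H4 H5 H6 H7].
  assert (Ez : forall t, 0 <= t -> z t = w t) by (intros t Ht; apply (E t Ht)).
  assert (Edz : forall t, 0 <= t -> dz t = dw t) by (intros t Ht; apply (E t Ht)).
  split; try intros t Ht; rewrite ?Ez, ?Edz by lra; auto.
Qed.

Lemma sine_profile (phi s : R -> R) k Q :
  0 < k -> 0 < Q -> (forall t t', t < t' -> phi t < phi t') -> (forall t, 0 < s t) ->
  phi 0 = 0 -> phi Q = PI / 2 -> phi (2 * Q) = PI -> phi (3 * Q) = PI + PI / 2 ->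
  phi (4 * Q) = PI + PI ->
  period_profile Q (fun t => k * sin (phi t)) (fun t => k * cos (phi t) * s t).
Proof.
  intros Hk HQ Hinc Hs P0 P1 P2 P3 P4.
  assert (Hin : forall t m n, m * Q < t < n * Q -> phi (m * Q) < phi t < phi (n * Q))
    by (intros; split; apply Hinc; lra).
  split; cbv beta; auto.
  - rewrite P0, sin_0. ring.
  - intros t Ht. apply Rmult_lt_0_compat; auto. apply Rmult_lt_0_compat; auto.
    destruct (Req_dec t 0) as [->|]; [rewrite P0, cos_0; lra|].
    apply cos_gt_0; pose proof (Hin t 0 1 ltac:(lra)); rewrite ?Rmult_0_l, ?Rmult_1_l in *; lra.
  - rewrite P1, cos_PI2. ring.
  - intros t Ht. pose proof (Hin t 1 3 ltac:(lra)). rewrite Rmult_1_l, P1, P3 in *.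
    assert (cos (phi t) < 0) by (apply cos_lt_0; lra).
    assert (k * cos (phi t) < 0) by nra. specialize (Hs t). nra.
  - rewrite P3, Rplus_comm, neg_cos, cos_PI2. ring.
  - intros t Ht. pose proof (Hin t 3 4 ltac:(lra)). rewrite P3, P4 in *.
    assert (0 < cos (phi t)).
    { replace (phi t) with (phi t - 2 * PI + 2 * INR 1 * PI) by (simpl; ring).
      rewrite cos_period. apply cos_gt_0; lra. }
    specialize (Hs t). apply Rmult_lt_0_compat; [nra|auto].
  - intros t Ht. pose proof (Hin t 2 4 ltac:(lra)). rewrite P2, P4 in *.
    assert (sin (phi t) < 0) by (apply sin_lt_0; lra). nra.
  - rewrite P4, <- (Rmult_1_l PI) at 1. replace (1 * PI + PI) with (2 * PI) by ring.
    rewrite sin_2PI. ring.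
Qed.

Lemma quarter_period_pos a : 0 < a -> 0 < quarter_period a.
Proof.
  intros Ha. unfold quarter_period, phase_time. pose proof PI_RGT_0.
  pose proof (ell_int_pos (beta_of a) a (PI / 2) (beta_of_pos a) Ha ltac:(lra)). lra.
Qed.

Lemma model_speed_0 a : 0 < a -> 2 * a ^ 2 < 1 ->
  sqrt (1 - 2 * a ^ 2) * (2 * sqrt (ell_den (beta_of a) a 0)) = sqrt (1 - 4 * a ^ 4).
Proof.
  intros Ha Ha2. pose proof (beta_of_pos a). unfold ell_den. rewrite cos_0, sin_0.
  replace (beta_of a ^ 2 * 1 ^ 2 + a ^ 2 * 0 ^ 2) with (beta_of a ^ 2) by ring.
  rewrite sqrt_pow2 by lra. unfold beta_of.
  replace (1 - 4 * a ^ 4) with ((1 - 2 * a ^ 2) * (1 + 2 * a ^ 2)) by ring.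
  rewrite sqrt_mult by nra. field.
Qed.

Lemma model_solution a : 0 < a -> 2 * a ^ 2 < 1 ->
  exists w dw : R -> R,
    (forall t, derivable_pt_lim w t (dw t)) /\
    (forall t, derivable_pt_lim dw t (z_force (w t))) /\
    (forall t, Rabs (w t) <= 1) /\ dw 0 = sqrt (1 - 4 * a ^ 4) /\
    period_profile (quarter_period a) w dw.
Proof.
  intros Ha Ha2. pose proof (beta_of_pos a) as Hb.
  destruct (phase_exists a Ha Ha2) as [phi [Hphi1 [Hphi2 [Hinc Hdphi]]]].
  destruct (phase_time_multiples a Ha) as [T0 [T2 [T3 T4]]].
  set (speed p := 2 * sqrt (ell_den (beta_of a) a p)).
  assert (Hspeed : forall p, 0 < speed p).
  { intros p. pose proof (sqrt_lt_R0 _ (ell_den_pos _ _ p Hb Ha)). unfold speed. lra. }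
  set (k := sqrt (1 - 2 * a ^ 2)).
  assert (Hk2 : k ^ 2 = 1 - 2 * a ^ 2) by (apply pow2_sqrt; lra).
  assert (Hk : 0 < k) by (apply sqrt_lt_R0; lra).
  assert (P0 : phi 0 = 0) by (rewrite <- T0 at 1; apply Hphi2).
  exists (fun t => k * sin (phi t)), (fun t => k * cos (phi t) * speed (phi t)).
  split; [|split; [|split; [|split]]].
  - intros t. rewrite Rmult_assoc. apply derivable_pt_lim_scal.
    apply (derivable_pt_lim_comp phi sin), derivable_pt_lim_sin. apply Hdphi.
  - intros t.
    replace (z_force (k * sin (phi t)))
      with (z_force (k * sin (phi t)) / speed (phi t) * speed (phi t))
      by (field; specialize (Hspeed (phi t)); lra).
    apply (derivable_pt_lim_comp phi (fun p => k * cos p * speed p)); [apply Hdphi|].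
    now apply model_velocity_derive.
  - intros t. pose proof (SIN_bound (phi t)). assert (k <= 1) by nra.
    apply Rabs_le. split; nra.
  - cbv beta. rewrite P0, cos_0, Rmult_1_r. apply model_speed_0; assumption.
  - apply sine_profile; auto using quarter_period_pos.
    + apply Hphi2.
    + rewrite <- T2. apply Hphi2.
    + rewrite <- T3. apply Hphi2.
    + rewrite <- T4. apply Hphi2.
Qed.

Lemma lt_inv_sqrt2_sqr a : 0 < a -> a < / sqrt 2 -> 2 * a ^ 2 < 1.
Proof.
  intros Ha Ha2. pose proof (sqrt_lt_R0 2 ltac:(lra)). pose proof (sqrt_sqrt 2 ltac:(lra)).
  apply (Rmult_lt_compat_r (sqrt 2)) in Ha2; [|lra]. rewrite Rinv_l in Ha2 by lra. nra.
Qed.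

Lemma solution_profile L x y z : is_sol_L L x y z ->
  exists a, 0 < a /\ L_of a = L /\
    (forall t, derivable_pt_lim z t (x t ^ 2 - y t ^ 2)) /\
    (forall t, (x t ^ 2 - y t ^ 2) ^ 2 = (1 - z t ^ 2) ^ 2 - 4 * a ^ 4) /\
    period_profile (quarter_period a) z (fun t => x t ^ 2 - y t ^ 2).
Proof.
  intros (a & x0 & y0 & Ha & Ha2 & HL & Hxy & Hy0 & Hn & Hp & Ex & Ey & Ez & Hs).
  pose proof (lt_inv_sqrt2_sqr a Ha Ha2) as Ha2'.
  assert (Hprod : forall t, x t * y t = a ^ 2)
    by (intros t; rewrite (solves_system_xy_const x y z Hs t), Ex, Ey; exact Hp).
  assert (Hnorm : forall t, x t ^ 2 + y t ^ 2 + z t ^ 2 = 1).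
  { intros t. rewrite (solves_system_norm_const x y z Hs t), Ex, Ey, Ez. lra. }
  assert (Henergy : forall t, (x t ^ 2 - y t ^ 2) ^ 2 = (1 - z t ^ 2) ^ 2 - 4 * a ^ 4).
  { intros t. replace (1 - z t ^ 2) with (x t ^ 2 + y t ^ 2) by (rewrite <- (Hnorm t); ring).
    replace (4 * a ^ 4) with (4 * (a ^ 2) ^ 2) by ring. rewrite <- (Hprod t). ring. }
  exists a. split; [exact Ha|]. split; [exact HL|].
  split; [intros t; apply (Hs t)|]. split; [exact Henergy|].
  destruct (model_solution a Ha Ha2') as (w & dw & Hw & Hdw & Bw & Hdw0 & Hprof).
  apply (period_profile_ext _ _ _ w dw); [|exact Hprof].
  apply (second_order_uniqueness z_force 4); [lra|intros t; apply (Hs t)| |exact Hw|exact Hdw| | |].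
  - now apply solves_system_z_second_order.
  - intros t. apply z_force_lipschitz; [|apply Bw].
    specialize (Hnorm t). apply Rabs_le. pose proof (pow2_ge_0 (x t)). pose proof (pow2_ge_0 (y t)).
    split; nra.
  - rewrite Ez. symmetry. exact (profile_z_0 _ _ _ Hprof).
  - rewrite Hdw0, Ex, Ey. rewrite <- (sqrt_pow2 (x0 ^ 2 - y0 ^ 2)) by nra.
    f_equal. specialize (Henergy 0). rewrite Ex, Ey, Ez in Henergy. rewrite Henergy. ring.
Qed.

(** * Crossings of two solutions *)

Section Crossings.

Variables (zL dzL zM dzM : R -> R) (aL aM Q L : R).
Hypothesis Ha : aM ^ 4 < aL ^ 4.
Hypothesis HdL : forall t, derivable_pt_lim zL t (dzL t).
Hypothesis HdM : forall t, derivable_pt_lim zM t (dzM t).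
Hypothesis HeL : forall t, dzL t ^ 2 = (1 - zL t ^ 2) ^ 2 - 4 * aL ^ 4.
Hypothesis HeM : forall t, dzM t ^ 2 = (1 - zM t ^ 2) ^ 2 - 4 * aM ^ 4.
Hypothesis HzL0 : zL 0 = 0.
Hypothesis HzLL : zL L = 0.
Hypothesis HM : period_profile Q zM dzM.
Hypothesis HLQ : L < 4 * Q.

Let f t := zM t - zL t.
Let df t := dzM t - dzL t.

Lemma crossing_diff_derive t : derivable_pt_lim f t (df t).
Proof. now apply derivable_pt_lim_minus. Qed.

Lemma crossing_transversal t : f t = 0 ->
  dzM t <> 0 /\ (0 < dzM t -> 0 < df t) /\ (dzM t < 0 -> df t < 0).
Proof.
  intros Hf. unfold f, df in *. assert (E : zM t = zL t) by lra.
  pose proof (HeL t) as EL. pose proof (HeM t) as EM. rewrite E in EM.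
  assert (dzL t ^ 2 < dzM t ^ 2) by lra.
  repeat split; intros; nra.
Qed.

Lemma crossing_diff_pos_early t : 0 < t < Q -> 0 < f t.
Proof.
  apply (pos_after_zero f df 0 Q crossing_diff_derive).
  { unfold f. rewrite HzL0, (profile_z_0 _ _ _ HM). ring. }
  intros s Hs Hfs. apply (crossing_transversal s Hfs), (profile_rise _ _ _ HM). lra.
Qed.

Lemma crossings_in_middle t : 0 < t < L -> f t = 0 -> Q < t < 3 * Q.
Proof.
  intros Ht Hft. destruct (crossing_transversal t Hft) as [Hnz _].
  pose proof (profile_Q_pos _ _ _ HM).
  destruct (Rle_lt_dec t Q) as [HtQ|HtQ].
  { destruct (Req_dec t Q) as [->|]; [now destruct Hnz; apply (profile_dz_Q _ _ _ HM)|].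
    pose proof (crossing_diff_pos_early t ltac:(lra)). lra. }
  destruct (Rlt_le_dec t (3 * Q)) as [Ht3|Ht3]; [lra|exfalso].
  destruct (Req_dec t (3 * Q)) as [->|]; [now destruct Hnz; apply (profile_dz_3Q _ _ _ HM)|].
  assert (Hlate : 0 < f L).
  { apply (pos_after_zero f df t (4 * Q) crossing_diff_derive Hft); [|lra].
    intros s Hs Hfs. apply (crossing_transversal s Hfs), (profile_rise_again _ _ _ HM). lra. }
  unfold f in Hlate. rewrite HzLL in Hlate.
  pose proof (profile_neg _ _ _ HM L ltac:(lra)). lra.
Qed.

Lemma at_most_one_crossing t1 t2 : 0 < t1 < L -> 0 < t2 < L ->
  zM t1 = zL t1 -> zM t2 = zL t2 -> t1 = t2.
Proof.
  assert (Hlt : forall u v, 0 < u < L -> 0 < v < L -> f u = 0 -> f v = 0 -> ~ u < v).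
  { intros u v Hu Hv Hfu Hfv Huv.
    pose proof (crossings_in_middle u Hu Hfu). pose proof (crossings_in_middle v Hv Hfv).
    enough (0 < - f v) by lra.
    apply (pos_after_zero (fun t => - f t) (fun t => - df t) u (3 * Q)); [| | |lra].
    - intros t. apply derivable_pt_lim_opp, crossing_diff_derive.
    - cbv beta. rewrite Hfu. ring.
    - intros s Hs Hfs. assert (Hfs' : f s = 0) by lra.
      enough (df s < 0) by lra.
      apply (crossing_transversal s Hfs'), (profile_fall _ _ _ HM). lra. }
  intros Ht1 Ht2 E1 E2.
  assert (F1 : f t1 = 0) by (unfold f; lra). assert (F2 : f t2 = 0) by (unfold f; lra).
  destruct (Rtotal_order t1 t2) as [H12|[H12|H12]]; [|exact H12|]; exfalso.
  - exact (Hlt t1 t2 Ht1 Ht2 F1 F2 H12).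
  - exact (Hlt t2 t1 Ht2 Ht1 F2 F1 H12).
Qed.

End Crossings.

Theorem lemma8p8 :
  forall (L M : R) (xL yL zL xM yM zM : R -> R),
    PI * sqrt 2 < L -> L < M ->
    is_sol_L L xL yL zL -> is_sol_L M xM yM zM ->
    forall t1 t2 : R,
      0 < t1 < L -> 0 < t2 < L ->
      zM t1 = zL t1 -> zM t2 = zL t2 -> t1 = t2.
Proof.
  (* [PI * sqrt 2 < L] only guarantees that [is_sol_L L] is satisfiable. *)
  intros L M xL yL zL xM yM zM _ HLM SL SM.
  destruct (solution_profile L xL yL zL SL) as (aL & HaL & HLa & HdL & HeL & PL).
  destruct (solution_profile M xM yM zM SM) as (aM & HaM & HMa & HdM & HeM & PM).
  assert (Halpha : aM < aL).
  { apply Rnot_le_lt. intros Hle. pose proof (L_of_antitone aL aM ltac:(lra)). lra. }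
  apply (at_most_one_crossing zL (fun t => xL t ^ 2 - yL t ^ 2) zM (fun t => xM t ^ 2 - yM t ^ 2)
    aL aM (quarter_period aM) L); auto.
  - assert (aM * aM < aL * aL) by nra. simpl. nra.
  - exact (profile_z_0 _ _ _ PL).
  - rewrite <- HLa, L_of_quarter_period by exact HaL. exact (profile_z_4Q _ _ _ PL).
  - rewrite <- L_of_quarter_period, HMa by exact HaM. exact HLM.
Qed.
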